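(* For every $c\in(0,1]$ and Lebesgue-almost every irrational $\alpha\in(0,1)$, setting $T_n:=S(\alpha,n,\lceil cn\rceil)^{1/\lceil cn\rceil}$, we have $|T_n-T_{n+1}|\to0$ as $n\to\infty$; more precisely $|T_n-T_{n+1}|=O\!\left(\frac{\log n}{n}\right)$.
   Context: Every irrational $\alpha\in(0,1)$ has a unique continued fraction expansion $\alpha = 1/(a_1(\alpha)+1/(a_2(\alpha)+\cdots))$ with digits $a_i(\alpha)\in\mathbb{N}_{\ge1}$. For $1\le k\le n$ integers, \[ S(\alpha,n,k) := \binom{n}{k}^{-1}\sum_{1\le i_1<\cdots<i_k\le n} a_{i_1}(\alpha)\cdots a_{i_k}(\alpha). \] *)

From HB Require Import structures.
From mathcomp Require Import all_boot all_order all_algebra.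
From mathcomp Require Import all_classical all_reals all_analysis.
Set Implicit Arguments. Unset Strict Implicit. Unset Printing Implicit Defensive.
Import Order.TTheory GRing.Theory Num.Theory.
Local Open Scope ring_scope.

Section CF.
Variable R : realType.

Definition gauss (x : R) : R := x^-1 - (Num.floor (x^-1))%:~R.

(* i-th continued fraction digit a_i(x), i >= 1:  a_i = floor(1 / G^(i-1) x) *)
Definition cf_digit (x : R) (i : nat) : nat :=
  `|Num.floor ((iter i.-1 gauss x)^-1)|%N.

(* S(alpha,n,k) = C(n,k)^{-1} sum_{1<=i_1<...<i_k<=n} a_{i_1}...a_{i_k};
   index i : 'I_n stands for digit position i+1. *)
Definition S_cf (alpha : R) (n k : nat) : R :=
  ('C(n, k))%:R^-1 *
  \sum_(A : {set 'I_n} | #|A| == k) \prod_(i in A) ((cf_digit alpha i.+1)%:R : R).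

Definition ceil_cn (c : R) (n : nat) : nat := `|Num.ceil (c * n%:R)|%N.

Definition T_cf (c alpha : R) (n : nat) : R :=
  S_cf alpha n (ceil_cn c n) `^ ((ceil_cn c n)%:R^-1).

End CF.

(* Let S_n := S(alpha, n, k_n) with k_n := ceil(c n), so that T_n = exp (ln S_n / k_n).
   Since S_n is a mean of elementary symmetric functions of the digits, the
   Newton-type inequalities (n - k) e_k <= (k + 1) e_(k+1) <= M (n - k) e_k, with M
   the largest of the first n + 1 digits, and k_(n+1) - k_n in {0, 1} give
   S_n / (n + 1) <= S_(n+1) <= M S_n, hence |ln S_(n+1) - ln S_n| <= ln (n + 1) + ln M.
   For almost every alpha, Borel-Cantelli together with estimates of the Lebesgue
   measure of cylinder sets of the Gauss map shows that eventually a_(n+1) <= (n + 1)^2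
   and a_1 ... a_n <= 16^n.  The first bound gives ln M = O(log n); the second bounds
   ln S_n / k_n uniformly, so exp is Lipschitz on the relevant range and
   |T_n - T_(n+1)| = O(log n / n). *)

From HB Require Import structures.
From mathcomp Require Import all_boot all_order all_algebra.
From mathcomp Require Import all_classical all_reals all_analysis.
From mathcomp Require Import ring lra zify.
Import Order.TTheory GRing.Theory Num.Theory.
Import numFieldNormedType.Exports.
Local Open Scope classical_set_scope.
Local Open Scope ring_scope.
Set Implicit Arguments. Unset Strict Implicit. Unset Printing Implicit Defensive.

Section ElementarySymmetric.
Variables (R : comNzRingType) (f : nat -> R).

Definition elem_sym_poly (n : nat) : {poly R} := \prod_(i < n) (f i *: 'X + 1).

Definition elem_sym (n k : nat) : R := (elem_sym_poly n)`_k.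

Lemma elem_sym0 k : elem_sym 0 k = (k == 0)%:R.
Proof. by rewrite /elem_sym /elem_sym_poly big_ord0 coefC; case: k. Qed.

Lemma elem_sym_polyS n : elem_sym_poly n.+1 = elem_sym_poly n * (f n *: 'X + 1).
Proof. by rewrite /elem_sym_poly big_ord_recr. Qed.

Lemma elem_symn0 n : elem_sym n 0 = 1.
Proof.
elim: n => [|n IH]; first by rewrite elem_sym0.
by rewrite /elem_sym elem_sym_polyS mulrDr mulr1 coefD -scalerAr coefZ coefMX mulr0 add0r.
Qed.

Lemma elem_symSS n k : elem_sym n.+1 k.+1 = elem_sym n k.+1 + f n * elem_sym n k.
Proof.
by rewrite /elem_sym elem_sym_polyS mulrDr mulr1 coefD -scalerAr coefZ coefMX addrC.
Qed.

Lemma elem_sym_eq0 n k : (n < k)%N -> elem_sym n k = 0.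
Proof.
elim: n k => [|n IH] [|k] //; first by rewrite elem_sym0.
by rewrite ltnS => hk; rewrite elem_symSS !IH ?mulr0 ?addr0 // (leq_trans hk).
Qed.

Lemma elem_sym_sum_prod n k :
  \sum_(A : {set 'I_n} | #|A| == k) \prod_(i in A) f i = elem_sym n k.
Proof.
have prod_subset (J : {set 'I_n}) :
    \prod_(i < n) (if i \in J then f i *: 'X else 1) = (\prod_(i in J) f i) *: 'X^#|J|.
  rewrite -big_mkcond /=; under eq_bigr do rewrite -mul_polyC.
  by rewrite big_split /= prodr_const -mul_polyC rmorph_prod.
rewrite /elem_sym /elem_sym_poly bigA_distr coef_sum.
under [RHS]eq_bigr do rewrite prod_subset coefZ coefXn.
rewrite [LHS]big_mkcond [RHS]big_mkcond; apply: eq_bigr => J _.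
by rewrite eq_sym; case: eqP; rewrite ?mulr1 ?mulr0.
Qed.

End ElementarySymmetric.

Section ElementarySymmetricBounds.
Variables (R : realDomainType) (f : nat -> R).
Hypothesis f_ge1 : forall i, 1 <= f i.

Lemma prod_ge1 n : 1 <= \prod_(i < n) f i.
Proof.
elim: n => [|n IH]; first by rewrite big_ord0.
by rewrite big_ord_recr /=; have := f_ge1 n; nra.
Qed.

Lemma elem_sym_ge0 n k : 0 <= elem_sym f n k.
Proof.
elim: n k => [|n IH] k; first by rewrite elem_sym0 ler0n.
case: k => [|k]; first by rewrite elem_symn0.
by rewrite elem_symSS; have := IH k.+1; have := IH k; have := f_ge1 n; nra.
Qed.

Lemma elem_sym_ge_bin n k : 'C(n, k)%:R <= elem_sym f n k.
Proof.
elim: n k => [|n IH] k; first by rewrite elem_sym0 bin0n.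
case: k => [|k]; first by rewrite elem_symn0 bin0.
rewrite elem_symSS binS natrD; have := IH k.+1; have := IH k; have := f_ge1 n.
by have := elem_sym_ge0 n k; nra.
Qed.

Lemma elem_sym_le_bin_prod n k : elem_sym f n k <= 'C(n, k)%:R * \prod_(i < n) f i.
Proof.
elim: n k => [|n IH] k; first by rewrite elem_sym0 bin0n big_ord0 mulr1.
rewrite big_ord_recr /=; have f1 := f_ge1 n.
move: (\prod_(i < n) f i) (prod_ge1 n) IH => P P1 IH.
case: k => [|k]; first by rewrite elem_symn0 bin0 mul1r; nra.
rewrite elem_symSS binS natrD; have := IH k.+1; have := IH k.
have := elem_sym_ge0 n k; have := ler0n R 'C(n, k.+1).
set a := 'C(n, k.+1)%:R; set b := 'C(n, k)%:R => a0 e0 hk hk1.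
have : a * P <= a * P * f n by apply: ler_peMr => //; apply: mulr_ge0 => //; lra.
have : f n * elem_sym f n k <= f n * (b * P) by rewrite ler_wpM2l //; lra.
lra.
Qed.

(* Each k-subset extends in n - k ways to a (k+1)-subset, and each (k+1)-subset
   arises k + 1 times; the new factor lies in [1, M]. *)
Lemma elem_sym_succ_ge n k : (n - k)%:R * elem_sym f n k <= k.+1%:R * elem_sym f n k.+1.
Proof.
elim: n k => [|n IH] k; first by rewrite sub0n mul0r mulr_ge0 ?elem_sym_ge0.
have f1 := f_ge1 n.
case: k => [|k].
  rewrite subn0 elem_symn0 elem_symSS elem_symn0 !mulr1 mul1r.
  by have := IH 0%N; rewrite subn0 elem_symn0 mulr1 mul1r -natr1; lra.
rewrite subSS; have [hk|hk] := leqP n k.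
  by rewrite (eqP (_ : n - k == 0)%N) ?subn_eq0 // mul0r mulr_ge0 ?elem_sym_ge0.
have nk : (n - k)%:R = (n - k.+1)%:R + 1 :> R by rewrite natr1; congr _%:R; lia.
have h1 := IH k.+1; have h2 := IH k.
have h3 : f n * ((n - k)%:R * elem_sym f n k) <= f n * (k.+1%:R * elem_sym f n k.+1).
  by rewrite ler_wpM2l //; lra.
have h4 : elem_sym f n k.+1 <= f n * elem_sym f n k.+1.
  by apply: ler_peMl; rewrite ?elem_sym_ge0.
rewrite !elem_symSS nk in h2 h3 *; rewrite -!natr1 in h1 h2 h3 *; nra.
Qed.

Lemma elem_sym_succ_le n k (M : R) : (forall i, (i < n)%N -> f i <= M) ->
  k.+1%:R * elem_sym f n k.+1 <= M * (n - k)%:R * elem_sym f n k.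
Proof.
elim: n k => [|n IH] k hM; first by rewrite elem_sym0 mulr0 sub0n mulr0 mul0r.
have {}IH k' := IH k' (fun i hi => hM i (ltnW hi)).
have fM : f n <= M by exact: hM.
have f1 := f_ge1 n.
case: k => [|k].
  rewrite subn0 elem_symn0 elem_symSS elem_symn0 !mulr1 mul1r.
  by have := IH 0%N; rewrite subn0 elem_symn0 mulr1 mul1r -natr1; lra.
rewrite subSS; have [hk|hk] := leqP n k.
  by rewrite (eqP (_ : n - k == 0)%N) ?subn_eq0 // mulr0 mul0r elem_sym_eq0 ?mulr0.
have nk : (n - k)%:R = (n - k.+1)%:R + 1 :> R by rewrite natr1; congr _%:R; lia.
have h1 := IH k.+1; have h2 := IH k.
have h3 : f n * (k.+1%:R * elem_sym f n k.+1) <= f n * (M * (n - k)%:R * elem_sym f n k).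
  by rewrite ler_wpM2l //; lra.
have h4 : f n * elem_sym f n k.+1 <= M * elem_sym f n k.+1 by rewrite ler_wpM2r ?elem_sym_ge0.
rewrite !elem_symSS nk in h2 h3 *; rewrite -!natr1 in h1 h2 h3 *; nra.
Qed.

End ElementarySymmetricBounds.

Lemma ler_ratio_bounds (R : realFieldType) (x y z A B N w : R) :
  0 < A -> 0 < N -> 0 < w -> w * B = N * A ->
  x <= w * y <= N * z -> x / A / N <= y / B <= z / A.
Proof.
move=> A0 N0 w0 wB /andP[xy yz].
have NA0 : 0 < N * A by rewrite mulr_gt0.
have B0 : B != 0 by apply: contraTneq NA0 => B0; rewrite -wB B0 mulr0 ltxx.
have -> : y / B = w * y / (N * A) by rewrite -wB; field; rewrite B0 gt_eqF.
have -> : z / A = N * z / (N * A) by field; rewrite !gt_eqF.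
by rewrite -mulrA -invfM [A * N]mulrC !ler_pM2r ?invr_gt0 // xy yz.
Qed.

Section ElementarySymmetricMean.
Variables (R : realFieldType) (f : nat -> R).
Hypothesis f_ge1 : forall i, 1 <= f i.

Definition elem_sym_mean (n k : nat) : R := elem_sym f n k / 'C(n, k)%:R.

Lemma elem_sym_mean_ge1 n k : (k <= n)%N -> 1 <= elem_sym_mean n k.
Proof.
move=> kn; rewrite /elem_sym_mean ler_pdivlMr ?ltr0n ?bin_gt0 // mul1r.
exact: elem_sym_ge_bin.
Qed.

Lemma elem_sym_mean_le_prod n k : (k <= n)%N -> elem_sym_mean n k <= \prod_(i < n) f i.
Proof.
move=> kn; rewrite /elem_sym_mean ler_pdivrMr ?ltr0n ?bin_gt0 // mulrC.
exact: elem_sym_le_bin_prod.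
Qed.

Lemma elem_sym_mean_Sn n k (M : R) : (k < n)%N -> f n <= M ->
  elem_sym_mean n k.+1 / n.+1%:R <= elem_sym_mean n.+1 k.+1 <= M * elem_sym_mean n k.+1.
Proof.
move=> kn fM; rewrite /elem_sym_mean mulrA elem_symSS.
apply: (ler_ratio_bounds (w := (n - k)%:R)); rewrite ?ltr0n ?bin_gt0 ?subn_gt0 //.
  by rewrite -!natrM -subSS mul_bin_down.
have f1 := f_ge1 n; have e0 := elem_sym_ge0 f_ge1 n k; have e1 := elem_sym_ge0 f_ge1 n k.+1.
have hg := elem_sym_succ_ge f_ge1 n k.
have nk : (n - k)%:R + k.+1%:R = n.+1%:R :> R by rewrite -natrD; congr _%:R; lia.
have nk1 : 1 <= (n - k)%:R :> R by rewrite ler1n subn_gt0.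
apply/andP; split.
  have fe0 : 0 <= f n * elem_sym f n k by rewrite mulr_ge0 //; lra.
  nra.
have : f n * ((n - k)%:R * elem_sym f n k) <= M * (k.+1%:R * elem_sym f n k.+1).
  by apply: ler_pM => //; rewrite ?mulr_ge0 //; lra.
have : (n - k)%:R * elem_sym f n k.+1 <= M * ((n - k)%:R * elem_sym f n k.+1).
  by apply: ler_peMl; rewrite ?mulr_ge0 //; lra.
rewrite -nk; nra.
Qed.

Lemma elem_sym_mean_SS n k (M : R) : (k <= n)%N -> (forall i, (i <= n)%N -> f i <= M) ->
  elem_sym_mean n k / n.+1%:R <= elem_sym_mean n.+1 k.+1 <= M * elem_sym_mean n k.
Proof.
move=> kn hM; rewrite /elem_sym_mean mulrA elem_symSS.
apply: (ler_ratio_bounds (w := k.+1%:R)); rewrite ?ltr0n ?bin_gt0 //.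
  by rewrite -!natrM -mul_bin_diag.
have f1 := f_ge1 n; have fM := hM n (leqnn n).
have e0 := elem_sym_ge0 f_ge1 n k; have e1 := elem_sym_ge0 f_ge1 n k.+1.
have hl := elem_sym_succ_le f_ge1 k (fun i hi => hM i (ltnW hi)).
have nk : (n - k)%:R + k.+1%:R = n.+1%:R :> R by rewrite -natrD; congr _%:R; lia.
have k1 : 1 <= k.+1%:R :> R by rewrite ler1n.
apply/andP; split.
  have : elem_sym f n k <= f n * elem_sym f n k by apply: ler_peMl.
  have : 0 <= f n * elem_sym f n k by rewrite mulr_ge0 //; lra.
  nra.
have : k.+1%:R * (f n * elem_sym f n k) <= k.+1%:R * (M * elem_sym f n k).
  by rewrite ler_wpM2l ?ler_wpM2r //; lra.
rewrite -nk; nra.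
Qed.

End ElementarySymmetricMean.

Section GaussMap.
Variable R : realType.
Local Notation G := (@gauss R).

Definition irrational01 : set R := [set x | 0 < x < 1 /\ irrational x].

Lemma irrational_invB (y : R) (m : int) : irrational y -> irrational (y^-1 - m%:~R).
Proof.
move=> hy [q _ hq]; apply: hy; exists (q + m%:~R)^-1 => //.
by rewrite fmorphV rmorphD /= ratr_int hq subrK invrK.
Qed.

Lemma irrational_neq0 (y : R) : irrational y -> y != 0.
Proof. by move=> hy; apply/eqP => y0; apply: hy; exists 0 => //; rewrite rmorph0. Qed.

Lemma gauss_irrational01 (y : R) : irrational01 y -> irrational01 (G y).
Proof.
case=> /andP[y0 y1] hy; split; last exact: irrational_invB.
have /andP[h1 h2] := floor_itv (y^-1); rewrite intrD in h2.
rewrite /gauss subr_gt0 ltrBlDl; apply/andP; split; last by lra.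
rewrite lt_neqAle h1 andbT; apply/eqP => e.
by have /irrational_neq0 := irrational_invB (m := Num.floor y^-1) hy; rewrite e subrr eqxx.
Qed.

Lemma iter_gauss_irrational01 n (x : R) : irrational01 x -> irrational01 (iter n G x).
Proof. by move=> hx; elim: n => [|n IH] //=; apply: gauss_irrational01. Qed.

Lemma cf_digitE n (x : R) : irrational01 x ->
  (cf_digit x n.+1)%:R = (Num.floor (iter n G x)^-1)%:~R :> R.
Proof.
move=> /(iter_gauss_irrational01 n) [/andP[y0 _] _].
by rewrite /cf_digit natr_absz ger0_norm // floor_ge0 invr_ge0 ltW.
Qed.

Lemma cf_digit_gt0 n (x : R) : irrational01 x -> (0 < cf_digit x n.+1)%N.
Proof.
move=> /(iter_gauss_irrational01 n) [/andP[y0 y1] _].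
have : 1 <= Num.floor (iter n G x)^-1 by rewrite floor_ge_int invf_ge1 // ltW.
by rewrite /cf_digit /=; case: (Num.floor _) => // m; rewrite lez_nat.
Qed.

(* [cf_digitR x i] is the digit [a_(i+1)], so [cf_prod x n = a_1 ... a_n]. *)
Definition cf_digitR (x : R) (i : nat) : R := (cf_digit x i.+1)%:R.

Definition cf_prod (x : R) (n : nat) : R := \prod_(i < n) cf_digitR x i.

Lemma cf_digitR_ge1 (x : R) : irrational01 x -> forall i, 1 <= cf_digitR x i.
Proof. by move=> hx i; rewrite ler1n cf_digit_gt0. Qed.

Lemma iter_gaussS n (x : R) : irrational01 x ->
  iter n.+1 G x = (iter n G x)^-1 - (cf_digit x n.+1)%:R.
Proof. by move=> hx; rewrite cf_digitE. Qed.

(* [G] maps [[branch_pt v k, branch_pt u k]] onto [[u, v]] on its branch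
   where the digit is [k.+1]. *)
Definition branch_pt (w : R) (k : nat) : R := (k.+1%:R + w)^-1.

Lemma branch_pt_ge0 w k : 0 <= w -> 0 <= branch_pt w k.
Proof. by move=> w0; rewrite invr_ge0 addr_ge0. Qed.

Lemma branch_pt_le u v k : 0 <= u -> u <= v -> branch_pt v k <= branch_pt u k.
Proof.
move=> u0 uv; have k0 : 0 < k.+1%:R :> R := ltr0Sn _ _.
by rewrite lef_pV2 ?posrE ?lerD2l //; lra.
Qed.

Lemma branch_pt_le1 u k : 0 <= u -> branch_pt u k <= 1.
Proof.
move=> u0; have k1 : 1 <= k.+1%:R :> R by rewrite ler1n.
by rewrite invf_le1; lra.
Qed.

Lemma iter_gauss_branch n (x u v : R) : irrational01 x -> 0 <= u ->
  u <= iter n.+1 G x <= v ->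
  exists k, cf_digit x n.+1 = k.+1 /\ branch_pt v k <= iter n G x <= branch_pt u k.
Proof.
move=> hx u0 /andP[ux xv]; exists (cf_digit x n.+1).-1.
rewrite /branch_pt prednK ?cf_digit_gt0 //; split => //.
have [/andP[y0 _] _] := iter_gauss_irrational01 n hx.
have d1 : 1 <= (cf_digit x n.+1)%:R :> R by rewrite ler1n cf_digit_gt0.
rewrite iter_gaussS // in ux xv.
rewrite -[X in _ <= X <= _](invrK (iter n G x)).
by rewrite !lef_pV2 ?posrE ?invr_gt0 //; lra.
Qed.

End GaussMap.

Lemma nneseries_le_bound (R : realType) (a : nat -> R) (C : R) : (forall k, 0 <= a k) ->
  (forall N, \sum_(k < N) a k <= C) -> (\sum_(k <oo) (a k)%:E <= C%:E)%E.
Proof.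
move=> a0 hN; apply: lime_le; first by apply: is_cvg_nneseries => n _ _; rewrite lee_fin.
by apply: nearW => N; rewrite sumEFin lee_fin big_mkord.
Qed.

Lemma measure_bigcup_le d (T : measurableType d) (R : realType)
    (mu : {measure set T -> \bar R}) (B : nat -> set T) (a : nat -> R) (C : R) :
  (forall k, measurable (B k)) -> (forall k, (mu (B k) <= (a k)%:E)%E) ->
  (forall k, 0 <= a k) -> (forall N, \sum_(k < N) a k <= C) ->
  (mu (\bigcup_k B k) <= C%:E)%E.
Proof.
move=> mB hB a0 hN.
have mU := bigcupT_measurable _ mB.
apply: le_trans (@measure_sigma_subadditive _ _ _ mu _ B mB mU (fun _ h => h)) _.
apply: le_trans _ (nneseries_le_bound a0 hN).
by apply: lee_nneseries => k *; [exact: measure_ge0 | exact: hB].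
Qed.

Section RealBounds.
Variable R : realType.

(* The density [1 / (1 + x)] of the Gauss measure is at least [1/2] on [[0, 1]]. *)
Lemma subr_le_ln1D (u v : R) : 0 <= u -> u <= v -> v <= 1 ->
  v - u <= 2 * (ln (1 + v) - ln (1 + u)).
Proof.
move=> u0 uv v1; set w := (1 + u) / (1 + v).
have w0 : 0 < w by rewrite divr_gt0 //; lra.
have lnw : ln (1 + u) = ln w + ln (1 + v).
  by rewrite -lnM ?posrE ?divfK ?gt_eqF //; lra.
have : ln w <= w - 1 by have := @le_ln1Dx R (w - 1); rewrite [1 + _]addrC subrK; apply; lra.
have -> : w - 1 = (u - v) / (1 + v) by rewrite /w; field; rewrite gt_eqF //; lra.
have : (u - v) / (1 + v) <= (u - v) / 2.
  by apply: ler_wnM2l; [lra | rewrite lef_pV2 ?posrE; lra].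
rewrite lnw; lra.
Qed.

Lemma ln1DV (a : R) : 0 < a -> ln (1 + a^-1) = ln (a + 1) - ln a.
Proof.
move=> a0; rewrite -ln_div ?posrE; try lra.
by congr ln; rewrite mulrDl divff ?gt_eqF // mul1r.
Qed.

Lemma sqrt_div_sqr_le (a b : R) : 0 < a -> a <= b -> b ^+ 2 = a ^+ 2 + 1 ->
  b / (b ^+ 2) ^+ 2 <= 2 / a - 2 / b.
Proof.
move=> a0 ab hb; have b0 : 0 < b by lra.
rewrite -subr_ge0.
have -> : 2 / a - 2 / b - b / (b ^+ 2) ^+ 2
    = ((b - a) ^+ 2 * (2 * b + a) + a * (b ^+ 2 - a ^+ 2 - 1)) / (a * b ^+ 3).
  by field; rewrite !gt_eqF.
rewrite hb (_ : a ^+ 2 + 1 - a ^+ 2 - 1 = 0) ?mulr0 ?addr0; last by ring.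
by rewrite divr_ge0 ?mulr_ge0 ?sqr_ge0 ?exprn_ge0 //; lra.
Qed.

Lemma sum_sqrt_div_sqr_le3 N :
  \sum_(k < N) Num.sqrt (k.+1%:R : R) / k.+1%:R ^+ 2 <= 3.
Proof.
suff tele M : \sum_(k < M.+1) Num.sqrt (k.+1%:R : R) / k.+1%:R ^+ 2
    <= 3 - 2 / Num.sqrt M.+1%:R.
  case: N => [|N]; first by rewrite big_ord0.
  by apply: le_trans (tele N) _; rewrite lerBlDr lerDl divr_ge0 ?sqrtr_ge0.
elim: M => [|M IH].
  by rewrite big_ord1 sqrtr1 expr1n !divr1; lra.
rewrite big_ord_recr /=.
set a := Num.sqrt M.+1%:R in IH *; set b := Num.sqrt M.+2%:R.
have a0 : 0 < a by rewrite sqrtr_gt0 ltr0n.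
have ab : a <= b by rewrite ler_sqrt ?ler_nat.
have hb : b ^+ 2 = a ^+ 2 + 1 by rewrite !sqr_sqrtr ?ler0n // -natr1.
have hw : b / (b ^+ 2) ^+ 2 = b / M.+2%:R ^+ 2 by rewrite /b sqr_sqrtr.
have := sqrt_div_sqr_le a0 ab hb; rewrite hw.
by move=> h; apply: le_trans (lerD IH h) _; rewrite addrA subrK.
Qed.

Lemma sum_expr_le (q : R) N : 0 <= q < 1 -> \sum_(k < N) q ^+ k <= (1 - q)^-1.
Proof.
case/andP => q0 q1.
rewrite -[_^-1]mul1r ler_pdivlMr ?subr_gt0 // mulrC -opprB mulNr -subrX1 opprB.
by rewrite gerBl exprn_ge0.
Qed.

End RealBounds.

Section GaussPreimages.
Variable R : realType.
Local Notation lam := (@lebesgue_measure R).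
Local Notation G := (@gauss R).

Lemma ln1D_branch_pt (w : R) k : 0 <= w ->
  ln (1 + branch_pt w k) = ln (k.+2%:R + w) - ln (k.+1%:R + w).
Proof.
move=> w0; rewrite ln1DV; last by rewrite ltr_pwDl.
by rewrite -[k.+2%:R]natr1 addrAC.
Qed.

Lemma branch_pt_width (u v : R) k : 0 <= u -> u <= v ->
  branch_pt u k - branch_pt v k <= (v - u) / k.+1%:R ^+ 2.
Proof.
move=> u0 uv; have k0 : 0 < k.+1%:R :> R := ltr0Sn _ _.
have -> : branch_pt u k - branch_pt v k = (v - u) / ((k.+1%:R + u) * (k.+1%:R + v)).
  by rewrite /branch_pt; field; rewrite !gt_eqF //; lra.
rewrite ler_wpM2l ?subr_ge0 // lef_pV2 ?posrE ?mulr_gt0 ?exprn_gt0 //; try lra.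
by rewrite expr2 ler_pM //; lra.
Qed.

Lemma gauss_preimage_measure n (u v : R) : 0 <= u -> u <= v -> v <= 1 ->
  exists B : set R, [/\ measurable B,
    forall x, irrational01 x -> u <= iter n G x <= v -> B x &
    (lam B <= (2 * (ln (1 + v) - ln (1 + u)))%:E)%E].
Proof.
elim: n u v => [|n IH] u v u0 uv v1.
  exists `[u, v]%classic; split => //.
  rewrite lebesgue_measure_itv /=; case: ifP => _; rewrite ?lee_fin.
    exact: subr_le_ln1D.
  by have := subr_le_ln1D u0 uv v1; lra.
have /boolp.choice [B hB] k := IH (branch_pt v k) (branch_pt u k)
  (branch_pt_ge0 k (le_trans u0 uv)) (branch_pt_le k u0 uv) (branch_pt_le1 k u0).
exists (\bigcup_k B k); split.
- by apply: bigcupT_measurable => k; case: (hB k).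
- move=> x hx /(iter_gauss_branch hx u0) [k [_ hk]].
  by exists k => //; case: (hB k) => _ + _; apply.
pose L (w : R) j := ln (j.+1%:R + w).
have hL (w : R) k : 0 <= w -> ln (1 + branch_pt w k) = L w k.+1 - L w k.
  exact: ln1D_branch_pt.
pose a k := 2 * (ln (1 + branch_pt u k) - ln (1 + branch_pt v k)).
apply: (measure_bigcup_le (a := a)).
- by move=> k; case: (hB k).
- by move=> k; case: (hB k).
- move=> k; have pv0 := branch_pt_ge0 k (le_trans u0 uv); have pu0 := branch_pt_ge0 k u0.
  by rewrite pmulr_rge0 // subr_ge0 ler_ln ?posrE ?lerD2l ?branch_pt_le //; lra.
- move=> N; rewrite -mulr_sumr ler_wpM2l //.
  under eq_bigr do rewrite !hL ?(le_trans u0 uv) //.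
  rewrite sumrB -!(big_mkord xpredT (fun k => L _ k.+1 - L _ k)) !telescope_sumr //.
  have N1 : 0 < N.+1%:R :> R := ltr0Sn _ _.
  have : L u N <= L v N by rewrite ler_ln ?posrE ?lerD2l //; lra.
  by rewrite /L; lra.
Qed.

Lemma branch_pt_measure_bound n (u v t : R) k : 0 <= u -> u <= v -> 0 < t ->
  3 ^+ n * (branch_pt u k - branch_pt v k) / Num.sqrt (t / k.+1%:R)
  <= 3 ^+ n * (v - u) / Num.sqrt t * (Num.sqrt k.+1%:R / k.+1%:R ^+ 2).
Proof.
move=> u0 uv t0; have k0 : 0 < k.+1%:R :> R := ltr0Sn _ _.
have s0 : 0 < Num.sqrt t by rewrite sqrtr_gt0.
have sk0 : 0 < Num.sqrt k.+1%:R :> R by rewrite sqrtr_gt0.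
rewrite (sqrtrM _ (ltW t0)) (sqrtrV (ltW k0)).
set c := 3 ^+ n * Num.sqrt k.+1%:R / Num.sqrt t.
have c0 : 0 <= c by rewrite divr_ge0 ?mulr_ge0 ?exprn_ge0 ?sqrtr_ge0.
have -> : 3 ^+ n * (branch_pt u k - branch_pt v k) / (Num.sqrt t / Num.sqrt k.+1%:R)
    = c * (branch_pt u k - branch_pt v k) by rewrite /c; field; rewrite !gt_eqF.
have -> : 3 ^+ n * (v - u) / Num.sqrt t * (Num.sqrt k.+1%:R / k.+1%:R ^+ 2)
    = c * ((v - u) / k.+1%:R ^+ 2) by rewrite /c; field; rewrite !gt_eqF.
by apply: ler_wpM2l => //; exact: branch_pt_width.
Qed.

Lemma gauss_preimage_prod_measure n (u v t : R) : 0 <= u -> u <= v -> v <= 1 -> 0 < t ->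
  exists B : set R, [/\ measurable B,
    forall x, irrational01 x -> t <= cf_prod x n -> u <= iter n G x <= v -> B x &
    (lam B <= (3 ^+ n * (v - u) / Num.sqrt t)%:E)%E].
Proof.
elim: n u v t => [|n IH] u v t u0 uv v1 t0.
  have s0 : 0 < Num.sqrt t by rewrite sqrtr_gt0.
  rewrite expr0 mul1r; have [t1|t1] := leP t 1.
    exists `[u, v]%classic; split => //.
    rewrite lebesgue_measure_itv /=; case: ifP => _; rewrite lee_fin ?divr_ge0 ?subr_ge0 //.
    have st1 : Num.sqrt t <= 1 by rewrite -sqrtr1 ler_sqrt.
    by rewrite ler_pdivlMr //; nra.
  exists set0; split => //; last by rewrite measure0 lee_fin divr_ge0 ?subr_ge0 ?sqrtr_ge0.
  by move=> x _; rewrite /cf_prod big_ord0 => /(lt_le_trans t1); rewrite ltxx.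
have t0k k : 0 < t / k.+1%:R by rewrite divr_gt0.
have /boolp.choice [B hB] k := IH (branch_pt v k) (branch_pt u k) (t / k.+1%:R)
  (branch_pt_ge0 k (le_trans u0 uv)) (branch_pt_le k u0 uv) (branch_pt_le1 k u0) (t0k k).
exists (\bigcup_k B k); split.
- by apply: bigcupT_measurable => k; case: (hB k).
- move=> x hx tP /(iter_gauss_branch hx u0) [k [dk hk]].
  exists k => //; case: (hB k) => _ + _; apply => //.
  by rewrite ler_pdivrMr // -dk; move: tP; rewrite /cf_prod big_ord_recr.
set c := 3 ^+ n * (v - u) / Num.sqrt t.
have c0 : 0 <= c by rewrite divr_ge0 ?mulr_ge0 ?exprn_ge0 ?subr_ge0 ?sqrtr_ge0.
have -> : 3 ^+ n.+1 * (v - u) / Num.sqrt t = c * 3 by rewrite /c exprS; ring.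
apply: (measure_bigcup_le (a := fun k => c * (Num.sqrt k.+1%:R / k.+1%:R ^+ 2))).
- by move=> k; case: (hB k).
- move=> k; case: (hB k) => _ _ /le_trans; apply.
  by rewrite lee_fin; apply: branch_pt_measure_bound.
- by move=> k; rewrite mulr_ge0 // divr_ge0 ?sqrtr_ge0 ?exprn_ge0 ?ler0n.
- by move=> N; rewrite -mulr_sumr ler_wpM2l ?sum_sqrt_div_sqr_le3.
Qed.

End GaussPreimages.

Section CeilCN.
Variables (R : realType) (c : R).
Hypotheses (c0 : 0 < c) (c1 : c <= 1).

Lemma ceil_cnE m : (ceil_cn c m)%:R = (Num.ceil (c * m%:R))%:~R :> R.
Proof.
have cm0 : 0 <= c * m%:R := mulr_ge0 (ltW c0) (ler0n R m).
rewrite /ceil_cn natr_absz ger0_norm // ceil_ge0.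
by apply: lt_le_trans cm0; rewrite ltrN10.
Qed.

Lemma ceil_cn_ge m : c * m%:R <= (ceil_cn c m)%:R.
Proof. by rewrite ceil_cnE ceil_ge. Qed.

Lemma ceil_cn_le m : (ceil_cn c m <= m)%N.
Proof.
rewrite -(ler_nat R) ceil_cnE -[m%:R]/((m%:Z)%:~R) ler_int ceil_le_int.
by rewrite ler_piMl.
Qed.

Lemma ceil_cn_gt0 m : (0 < m)%N -> (0 < ceil_cn c m)%N.
Proof.
by move=> m0; rewrite -(ltr_nat R) (lt_le_trans _ (ceil_cn_ge m)) // mulr_gt0 ?ltr0n.
Qed.

Lemma ceil_cnS m : ceil_cn c m.+1 = ceil_cn c m \/ ceil_cn c m.+1 = (ceil_cn c m).+1.
Proof.
have h1 : Num.ceil (c * m%:R) <= Num.ceil (c * m.+1%:R).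
  by rewrite le_ceil // ler_wpM2l ?ler_nat // ltW.
have h2 : Num.ceil (c * m.+1%:R) <= Num.ceil (c * m%:R) + 1.
  by rewrite ceil_le_int intrD -natr1 mulrDr mulr1 lerD ?ceil_ge.
have h0 : 0 <= Num.ceil (c * m%:R).
  by have := mulr_ge0 (ltW c0) (ler0n R m); rewrite ceil_ge0; lra.
rewrite /ceil_cn; lia.
Qed.

End CeilCN.

Section RealSteps.
Variable R : realType.

Lemma dist_expR_le (a b E : R) : a <= E -> b <= E ->
  `|expR a - expR b| <= expR E * `|a - b|.
Proof.
wlog ab : a b / a <= b.
  move=> H aE bE; have [ab|/ltW ba] := leP a b; first exact: H.
  by rewrite distrC [`|a - b|]distrC; apply: H.
move=> aE bE; rewrite distrC [`|a - b|]distrC !ger0_norm ?subr_ge0 ?ler_expR //.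
have -> : expR b - expR a = expR b * (1 - expR (a - b)).
  by rewrite mulrBr mulr1 expRD expRN mulrCA divff ?mulr1 // gt_eqF ?expR_gt0.
have h1 := expR_ge1Dx (a - b).
apply: le_trans (_ : expR b * (b - a) <= _).
  by rewrite ler_wpM2l ?(ltW (expR_gt0 b)) //; lra.
by rewrite ler_wpM2r ?ler_expR //; lra.
Qed.

Lemma dist_ln_le (x y N M : R) : 0 < x -> 1 <= N -> 1 <= M ->
  x / N <= y <= M * x -> `|ln y - ln x| <= ln N + ln M.
Proof.
move=> x0 N1 M1 /andP[lo hi].
have N0 : 0 < N by lra.
have y0 : 0 < y by apply: lt_le_trans lo; rewrite divr_gt0.
have := ln_ge0 N1; have := ln_ge0 M1.
have : ln x - ln N <= ln y.
  by rewrite -ln_div ?posrE // ler_ln ?posrE ?divr_gt0.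
have : ln y <= ln M + ln x.
  by rewrite -lnM ?posrE ?mulr_gt0 // ?ler_ln ?posrE ?mulr_gt0 //; lra.
by rewrite ler_norml; lra.
Qed.

Lemma dist_div_step (a b B D K K' : R) : 0 < K -> K' = K \/ K' = K + 1 ->
  0 <= a -> a / K <= B -> `|b - a| <= D -> `|b / K' - a / K| <= (D + B) / K.
Proof.
move=> K0 hK a0 aB; rewrite ler_norml => /andP[ab1 ab2].
have aK0 : 0 <= a / K by rewrite divr_ge0 // ltW.
case: hK => ->.
  rewrite -mulrBl normrM [`|K^-1|]gtr0_norm ?invr_gt0 //.
  by apply: ler_wpM2r; [rewrite invr_ge0 ltW | rewrite ler_norml; lra].
have K1 : 0 < K + 1 by lra.
have -> : b / (K + 1) - a / K = ((b - a) - a / K) / (K + 1).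
  by field; rewrite !gt_eqF.
rewrite normrM [`|(K + 1)^-1|]gtr0_norm ?invr_gt0 //.
apply: le_trans (_ : (D + B) / (K + 1) <= _).
  by rewrite ler_wpM2r ?invr_ge0 ?(ltW K1) // ler_norml; lra.
rewrite ler_wpM2l ?lef_pV2 ?posrE //; lra.
Qed.

Lemma ln_succ_le (m : nat) : (2 <= m)%N -> ln m.+1%:R <= 2 * ln m%:R :> R.
Proof.
move=> m2; have m0 : 0 < m%:R :> R by rewrite ltr0n; lia.
rewrite mulr2n mulrDl mul1r -lnM ?posrE // ler_ln ?posrE ?mulr_gt0 //.
by rewrite -natrM ler_nat; nia.
Qed.

Lemma ln_div_le_sqrt (m : nat) : (0 < m)%N -> ln m%:R / m%:R <= 2 / Num.sqrt m%:R :> R.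
Proof.
move=> m0; have mp : 0 < m%:R :> R by rewrite ltr0n.
set s := Num.sqrt m%:R; have s0 : 0 < s by rewrite sqrtr_gt0.
have ss : s * s = m%:R by rewrite -expr2 sqr_sqrtr ?ler0n.
have hs : ln s <= s - 1 by have := @le_ln1Dx R (s - 1); rewrite [1 + _]addrC subrK; apply; lra.
rewrite -ss lnM ?posrE // ler_pdivrMr ?mulr_gt0 //.
have -> : 2 / s * (s * s) = 2 * s by field; rewrite gt_eqF.
lra.
Qed.

Lemma ln_div_bound_cvg0 (g : nat -> R) (C : R) (N : nat) : (forall m, 0 <= g m) ->
  (forall m, (N <= m)%N -> g m <= C * (ln m%:R / m%:R)) -> g @ \oo --> 0.
Proof.
move=> g0 hg; apply/cvgrPdist_le => e e0.
set C' := `|C| + 1; have C'0 : 0 < C' by rewrite ltr_pwDr ?normr_ge0.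
set M0 := `|Num.ceil ((2 * C' / e) ^+ 2)|%N.
exists (N + M0.+1)%N => // m /= hm.
have m0 : (0 < m)%N by lia.
have mp : 0 < m%:R :> R by rewrite ltr0n.
rewrite sub0r normrN ger0_norm //; apply: le_trans (hg m (leq_trans (leq_addr _ _) hm)) _.
have lm0 : 0 <= ln m%:R / m%:R :> R by rewrite divr_ge0 ?ln_ge0 ?ler1n ?ler0n.
apply: le_trans (_ : C' * (2 / Num.sqrt m%:R) <= _).
  apply: le_trans (_ : C' * (ln m%:R / m%:R) <= _).
    by rewrite ler_wpM2r // (le_trans (ler_norm C)) // lerDl.
  by rewrite ler_wpM2l ?ln_div_le_sqrt // ltW.
have s0 : 0 < Num.sqrt m%:R :> R by rewrite sqrtr_gt0.
have hM : (2 * C' / e) ^+ 2 <= m%:R.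
  apply: le_trans (ceil_ge _) _.
  have q0 : 0 <= Num.ceil ((2 * C' / e) ^+ 2).
    by rewrite ceil_ge0 (lt_le_trans _ (sqr_ge0 _)) // ltrN10.
  by rewrite -[Num.ceil _](ger0_norm q0) -natr_absz ler_nat; lia.
have hs : 2 * C' / e <= Num.sqrt m%:R.
  have q1 : 0 <= 2 * C' / e by rewrite divr_ge0 ?mulr_ge0 // ltW.
  by rewrite -(ger0_norm q1) -sqrtr_sqr ler_sqrt ?sqr_ge0.
move: hs; rewrite mulrA !ler_pdivrMr //; lra.
Qed.

End RealSteps.

Section MeanCeilStep.
Variables (R : realType) (c : R) (f : nat -> R) (K0 : R) (n0 : nat).
Hypotheses (c0 : 0 < c) (c1 : c <= 1) (f_ge1 : forall i, 1 <= f i) (K0_ge1 : 1 <= K0).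
Hypothesis f_le : forall m i, (i <= m)%N -> f i <= K0 * m.+1%:R ^+ 2.
Hypothesis prod_le : forall m, (n0 <= m)%N -> \prod_(i < m) f i <= 16 ^+ m.

Let S m := elem_sym_mean f m (ceil_cn c m).
Let tau m := ln (S m) / (ceil_cn c m)%:R.

Lemma mean_ceil_ge1 m : 1 <= S m.
Proof. exact/elem_sym_mean_ge1/ceil_cn_le. Qed.

Lemma mean_ceil_step m : (0 < m)%N ->
  S m / m.+1%:R <= S m.+1 <= K0 * m.+1%:R ^+ 2 * S m.
Proof.
move=> m0; rewrite /S; have := ceil_cn_le c0 c1 m.
case: (ceil_cnS c0 c1 m) => ->; last first.
  by move=> km; apply: elem_sym_mean_SS => // i; apply: f_le.
rewrite -(prednK (ceil_cn_gt0 c0 m0)) => km.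
by apply: elem_sym_mean_Sn => //; apply: f_le.
Qed.

Lemma ln_mean_ceil_step m : (0 < m)%N ->
  `|ln (S m.+1) - ln (S m)| <= ln m.+1%:R + ln (K0 * m.+1%:R ^+ 2).
Proof.
move=> m0; apply: dist_ln_le (mean_ceil_step m0).
- exact: lt_le_trans ltr01 (mean_ceil_ge1 m).
- by rewrite ler1n.
- by rewrite mulr_ege1 // expr_ge1 // ler1n.
Qed.

Lemma tau_le m : (n0 <= m)%N -> (0 < m)%N -> tau m <= ln 16 / c.
Proof.
move=> m0n m0; have k0 : 0 < (ceil_cn c m)%:R :> R by rewrite ltr0n ceil_cn_gt0.
have l16 : 0 <= ln 16 :> R by rewrite ln_ge0 // ler1n.
have : ln (S m) <= m%:R * ln 16.
  rewrite mulr_natl -lnXn ?ltr0n // ler_ln ?posrE ?exprn_gt0 ?ltr0n //.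
    exact: le_trans (elem_sym_mean_le_prod f_ge1 (ceil_cn_le c0 c1 m)) (prod_le m0n).
  exact: lt_le_trans ltr01 (mean_ceil_ge1 m).
rewrite /tau ler_pdivrMr // => h; apply: le_trans h _.
have -> : m%:R * ln 16 = ln 16 / c * (c * m%:R) by field; rewrite gt_eqF.
by rewrite ler_wpM2l ?ceil_cn_ge // divr_ge0 // ltW.
Qed.

Lemma tau_step m : (n0 <= m)%N -> (0 < m)%N -> `|tau m.+1 - tau m|
  <= (ln m.+1%:R + ln (K0 * m.+1%:R ^+ 2) + ln 16 / c) / (ceil_cn c m)%:R.
Proof.
move=> m0n m0; apply: dist_div_step.
- by rewrite ltr0n ceil_cn_gt0.
- by case: (ceil_cnS c0 c1 m) => ->; [left | right; rewrite -natr1].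
- exact/ln_ge0/mean_ceil_ge1.
- exact: tau_le.
- exact: ln_mean_ceil_step.
Qed.

Lemma ln_poly_le (B : R) m : 0 <= B -> (3 <= m)%N ->
  ln m.+1%:R + ln (K0 * m.+1%:R ^+ 2) + B <= (6 + (ln K0 + B) / ln 3) * ln m%:R.
Proof.
move=> B0 m3; have l3 : 0 < ln 3 :> R by rewrite ln_gt0 // ltr1n.
have lm3 : ln 3 <= ln m%:R :> R by rewrite ler_ln ?posrE ?ltr0n ?ler_nat //; lia.
have lK0 : 0 <= ln K0 by rewrite ln_ge0.
have lm1 := @ln_succ_le R m (leq_trans (isT : (2 <= 3)%N) m3).
rewrite lnM ?posrE ?exprn_gt0 ?ltr0n ?(lt_le_trans ltr01 K0_ge1) //.
rewrite expr2 lnM ?posrE ?ltr0n //.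
have : ln K0 + B <= (ln K0 + B) / ln 3 * ln m%:R.
  by rewrite mulrAC ler_pdivlMr // ler_wpM2l //; lra.
lra.
Qed.

Lemma expR_tau_step : exists C N, forall m, (N <= m)%N ->
  `|expR (tau m) - expR (tau m.+1)| <= C * (ln m%:R / m%:R).
Proof.
have B0 : 0 <= ln 16 / c by rewrite divr_ge0 ?ln_ge0 ?ler1n // ltW.
set E := expR (ln 16 / c); set A := 6 + (ln K0 + ln 16 / c) / ln 3.
exists (E / c * A), (n0 + 3)%N => m hm.
have m0n : (n0 <= m)%N by lia.
have m0 : (0 < m)%N by lia.
have -> : E / c * A * (ln m%:R / m%:R) = E * (A * ln m%:R / (c * m%:R)).
  by field; rewrite !gt_eqF ?ltr0n.
apply: le_trans (dist_expR_le (tau_le m0n m0) (tau_le (leqW m0n) isT)) _.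
rewrite distrC ler_wpM2l ?expR_ge0 //; apply: le_trans (tau_step m0n m0) _.
apply: ler_pM.
- have : 0 <= ln (K0 * m.+1%:R ^+ 2) by rewrite ln_ge0 // mulr_ege1 // expr_ge1 // ler1n.
  have : 0 <= ln m.+1%:R :> R by rewrite ln_ge0 // ler1n.
  lra.
- by rewrite invr_ge0 ler0n.
- by apply: ln_poly_le => //; lia.
- by rewrite lef_pV2 ?posrE ?ceil_cn_ge // ?mulr_gt0 ?ltr0n ?ceil_cn_gt0.
Qed.

End MeanCeilStep.

Lemma ae_eventually_notin d (T : measurableType d) (R : realType)
    (mu : {measure set T -> \bar R}) (F : nat -> set T) :
  (forall k, measurable (F k)) -> (\sum_(n <oo) mu (F n) < +oo)%E ->
  {ae mu, forall x, exists n0, forall j, (n0 <= j)%N -> ~ F j x}.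
Proof.
move=> mF hfin; exists (lim_sup_set F); split.
- by apply: bigcapT_measurable => n; apply: bigcup_measurable => k _.
- exact: lim_sup_set_cvg0.
- move=> x /= nP n _; apply: boolp.contrapT => nF; apply: nP.
  by exists n => j nj Fj; apply: nF; exists j.
Qed.

Lemma exists_ub (R : realDomainType) (f : nat -> R) n :
  exists2 K : R, 1 <= K & forall i, (i < n)%N -> f i <= K.
Proof.
elim: n => [|n [K K1 hK]]; first by exists 1.
exists (Num.max K (f n)); first by rewrite le_max K1.
move=> i; rewrite ltnS leq_eqVlt => /orP[/eqP ->|/hK fiK]; first by rewrite le_max lexx orbT.
by rewrite le_max fiK.
Qed.

Lemma eventually_sqr_bound (R : realDomainType) (f : nat -> R) n0 :
  (forall j, (n0 <= j)%N -> f j <= j.+1%:R ^+ 2) ->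
  exists2 K : R, 1 <= K & forall m i, (i <= m)%N -> f i <= K * m.+1%:R ^+ 2.
Proof.
move=> hf; have [K K1 hK] := exists_ub f n0; exists K => // m i im.
have m1 : 1 <= m.+1%:R ^+ 2 :> R by rewrite expr_ge1 ?ler1n.
have [/hK fiK|/hf fi] := ltnP i n0.
  by apply: le_trans fiK _; rewrite ler_peMr //; lra.
apply: le_trans fi (le_trans _ (ler_peMl _ K1)); last by rewrite exprn_ge0.
by rewrite lerXn2r ?nnegrE ?ler_nat.
Qed.

Lemma sqrtr_16X (R : rcfType) j : Num.sqrt (16 ^+ j : R) = 4 ^+ j.
Proof.
have -> : 16 ^+ j = (4 ^+ j) ^+ 2 :> R.
  by rewrite -exprM mulnC exprM; congr (_ ^+ _); rewrite expr2 -natrM.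
by rewrite sqrtr_sqr ger0_norm ?exprn_ge0.
Qed.

Lemma sum_digit_event_weights (R : realType) N :
  \sum_(k < N) (2 * (k.+1%:R ^+ 2)^-1 + (3 / 4) ^+ k) <= 10 :> R.
Proof.
rewrite big_split /= -mulr_sumr.
have : \sum_(k < N) (3 / 4 : R) ^+ k <= 4.
  apply: le_trans (sum_expr_le _ _) _; first lra.
  by rewrite (_ : 1 - 3 / 4 = 4^-1) ?invrK //; lra.
have : \sum_(k < N) (k.+1%:R ^+ 2 : R)^-1 <= 3.
  apply: le_trans (sum_sqrt_div_sqr_le3 R N); apply: ler_sum => k _.
  rewrite -[X in X <= _]mul1r; apply: ler_wpM2r; first by rewrite invr_ge0 exprn_ge0.
  by rewrite -{1}sqrtr1 ler_sqrt ?ler1n.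
lra.
Qed.

Section AlmostEverywhereBounds.
Variable R : realType.
Local Notation lam := (@lebesgue_measure R).
Local Notation G := (@gauss R).

(* The product threshold [16 ^+ j] makes the cylinder bounds [3 ^+ j / 4 ^+ j] summable. *)
Lemma cf_digit_events : exists F : nat -> set R, [/\ forall j, measurable (F j),
  (\sum_(j <oo) lam (F j) < +oo)%E &
  forall x j, irrational01 x -> ~ F j x ->
    cf_digitR x j <= j.+1%:R ^+ 2 /\ cf_prod x j <= 16 ^+ j].
Proof.
pose v j := (j.+1%:R ^+ 2)^-1 : R.
have v0 j : 0 < v j by rewrite invr_gt0 exprn_gt0.
have v1 j : v j <= 1 by rewrite invf_le1 ?exprn_gt0 // expr_ge1 // ler1n.
have /boolp.choice [A hA] j := gauss_preimage_measure j (lexx 0) (ltW (v0 j)) (v1 j).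
have /boolp.choice [B hB] j :=
  gauss_preimage_prod_measure j (lexx 0) ler01 (lexx 1) (exprn_gt0 j (ltr0n R 16)).
exists (fun j => A j `|` B j); split.
- by move=> j; apply: measurableU; [case: (hA j) | case: (hB j)].
- pose a j := 2 * v j + (3 / 4) ^+ j.
  apply: le_lt_trans (ltry 10); apply: le_trans (nneseries_le_bound (a := a) _ _).
  + apply: lee_nneseries => [k *|j _]; first exact: measure_ge0.
    apply: le_trans (measureU2 _ _ _) _; [by case: (hA j) | by case: (hB j) |].
    rewrite EFinD; apply: leeD.
    * case: (hA j) => _ _ /le_trans; apply; rewrite lee_fin addr0 ln1 subr0.
      by rewrite ler_wpM2l // le_ln1Dx // (lt_trans _ (v0 j)) // ltrN10.
    * case: (hB j) => _ _ /le_trans; apply.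
      by rewrite lee_fin subr0 mulr1 sqrtr_16X expr_div_n.
  + by move=> k; rewrite addr_ge0 ?mulr_ge0 ?exprn_ge0 ?(ltW (v0 k)) //; lra.
  + exact: sum_digit_event_weights.
- move=> x j xI nF; have [/andP[y0 y1] _] := iter_gauss_irrational01 j xI.
  split.
  + have vy : v j < iter j G x.
      rewrite ltNge; apply/negP => yv; apply: nF; left.
      by case: (hA j) => _ + _; apply => //; rewrite (ltW y0).
    rewrite /cf_digitR cf_digitE //; apply: le_trans (floor_le _) _.
    by rewrite -[_ ^+ 2]invrK -/(v j) ltW // ltf_pV2 ?posrE.
  + rewrite leNgt; apply/negP => Pj; apply: nF; right.
    by case: (hB j) => _ + _; apply => //; rewrite ?(ltW Pj) ?(ltW y0) ?(ltW y1).
Qed.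

Lemma ae_cf_digit_bounds : {ae lam, forall x, irrational01 x -> exists n0, forall j,
  (n0 <= j)%N -> cf_digitR x j <= j.+1%:R ^+ 2 /\ cf_prod x j <= 16 ^+ j}.
Proof.
have [F [mF hfin hF]] := cf_digit_events.
apply: (filterS (Filter := ae_filter_ringOfSetsType lam) _
  (@ae_eventually_notin _ _ R lam F mF hfin)) => x [n0 hn0] xI.
by exists n0 => j /hn0; apply: hF.
Qed.

End AlmostEverywhereBounds.

Lemma S_cfE (R : realType) (x : R) m k :
  S_cf x m k = elem_sym_mean (cf_digitR x) m k.
Proof. by rewrite /S_cf /elem_sym_mean -elem_sym_sum_prod mulrC. Qed.

Lemma T_cfE (R : realType) (c x : R) m : 0 < c -> c <= 1 -> irrational01 x ->
  T_cf c x m = expR (ln (S_cf x m (ceil_cn c m)) / (ceil_cn c m)%:R).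
Proof.
move=> c0 c1 xI; have := elem_sym_mean_ge1 (cf_digitR_ge1 xI) (ceil_cn_le c0 c1 m).
by rewrite /T_cf /powR S_cfE mulrC; case: eqP => // ->; rewrite ler10.
Qed.

Theorem lemma3p8 (R : realType) (c : R) (hc0 : 0 < c) (hc1 : c <= 1) :
  {ae (@lebesgue_measure R), forall alpha : R,
     0 < alpha < 1 -> @irrational R alpha ->
     ((fun n : nat => `|T_cf c alpha n - T_cf c alpha n.+1|) @ \oo --> (0 : R)) /\
     (exists C : R, exists N : nat, forall n : nat, (N <= n)%N ->
        `|T_cf c alpha n - T_cf c alpha n.+1| <= C * (ln (n%:R : R) / n%:R))}.
Proof.
apply: (filterS (Filter := ae_filter_ringOfSetsType _) _ (ae_cf_digit_bounds R)).
move=> x hx x01 xirr; have xI : irrational01 x by [].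
have [n0 hn0] := hx xI.
have [K0 K01 hK0] := eventually_sqr_bound (fun j jn => (hn0 j jn).1).
have [C [N hCN]] := expR_tau_step hc0 hc1 (cf_digitR_ge1 xI) K01 hK0
  (fun j jn => (hn0 j jn).2).
have hTN n : (N <= n)%N -> `|T_cf c x n - T_cf c x n.+1| <= C * (ln n%:R / n%:R).
  by move=> nN; rewrite !T_cfE // !S_cfE; exact: hCN.
split; last by exists C, N.
exact: ln_div_bound_cvg0 (fun n => normr_ge0 _) hTN.
Qed.
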